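(* Let $\mathbf k$ be a field, $V$ a finite-dimensional $\mathbf k$-vector space with a nondegenerate quadratic form $Q$, and let $N\in\tilde{\mathcal M}_Q$, $N\ne0$. Let $e\ge2$ be the smallest integer with $N^e=0$, and let $E$ be a complement to $\ker N^{e-1}$ in $V$. Then the linear map $E^{\oplus e}\to V$, $(v_0,v_1,\dots,v_{e-1})\mapsto v_0+Nv_1+\cdots+N^{e-1}v_{e-1}$, is injective, and the restriction of $\langle,\rangle$ to its image $W=E+NE+\cdots+N^{e-1}E$ has zero radical.
   Context: $\langle x,y\rangle=Q(x+y)-Q(x)-Q(y)$, with radical $R=\{x:\langle x,V\rangle=0\}$; $Q$ is nondegenerate if $Q|_R$ is injective. $\tilde{\mathcal M}_Q$ is the set of nilpotent $N\in\mathrm{End}(V)$ with $Q(Nx)=-\langle x,Nx\rangle$ for all $x\in V$. *)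

From HB Require Import structures.
From mathcomp Require Import all_boot all_order all_algebra.
Set Implicit Arguments. Unset Strict Implicit. Unset Printing Implicit Defensive.
Import GRing.Theory.
Local Open Scope ring_scope.

Section QF.
Variables (K : fieldType) (V : vectType K).

Definition polar (Q : V -> K) (x y : V) : K := Q (x + y) - Q x - Q y.

Definition is_quadratic_form (Q : V -> K) : Prop :=
  [/\ forall (a : K) (x : V), Q (a *: x) = a ^+ 2 * Q x,
      forall x y z : V, polar Q (x + y) z = polar Q x z + polar Q y z
    & forall (a : K) (x y : V), polar Q (a *: x) y = a * polar Q x y].

Definition in_radical (Q : V -> K) (x : V) : Prop := forall y : V, polar Q x y = 0.

Definition qf_nondegenerate (Q : V -> K) : Prop :=
  forall x y : V, in_radical Q x -> in_radical Q y -> Q x = Q y -> x = y.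

Definition lpow (f : 'End(V)) (n : nat) : 'End(V) :=
  iter n (fun g => (f \o g)%VF) \1%VF.

Definition nilpotent_end (f : 'End(V)) : Prop := exists n : nat, lpow f n = 0.

Definition in_tildeM (Q : V -> K) (N : 'End(V)) : Prop :=
  nilpotent_end N /\ forall x : V, Q (N x) = - polar Q x (N x).

End QF.

From HB Require Import structures.
From mathcomp Require Import all_boot all_order all_algebra.
From mathcomp Require Import ring zify.
Set Implicit Arguments. Unset Strict Implicit. Unset Printing Implicit Defensive.
Import GRing.Theory.
Local Open Scope ring_scope.

(* Polarizing Q(Nx) = -<x,Nx> gives <Nx,Ny> + <x,Ny> + <Nx,y> = 0, i.e. 1 + N
   preserves <,>.  Since N^e = 0 this yields <N^i a, N^k b> = 0 when i + k >= e,
   and <N^j a, N^k b> = (-1)^j <a, N^(j+k) b> when j + k = e - 1.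
   Both claims follow by a triangular argument on the coefficients v_i: applying
   N^(e-1-i), resp. pairing with N^(e-1-i) E, kills every term of index > i, so
   the first nonzero v_i would satisfy N^(e-1) v_i = 0, resp.
   <v_i, N^(e-1) E> = 0.  The former is impossible as E meets ker N^(e-1)
   trivially.  In the latter case N^(e-1) v_i is orthogonal to
   E + ker N^(e-1) = V and isotropic, hence zero by nondegeneracy, and again
   v_i = 0. *)

Lemma ord_ltn_ind n (P : 'I_n -> Prop) :
  (forall i : 'I_n, (forall j : 'I_n, (j < i)%N -> P j) -> P i) -> forall i, P i.
Proof.
move=> IH i; have [m] := ubnP i; elim: m i => // m IHm i lt_im.
by apply: IH => j lt_ji; apply: IHm; apply: leq_trans lt_ji _.
Qed.

Lemma sumr_ord_pivot (T : nmodType) n (F : 'I_n -> T) (i : 'I_n) :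
  (forall j : 'I_n, (j < i)%N -> F j = 0) ->
  (forall j : 'I_n, (i < j)%N -> F j = 0) ->
  \sum_j F j = F i.
Proof.
move=> Flt Fgt; rewrite (bigD1 i) //= big1 ?addr0 // => j.
by case: (ltngtP j i) => [/Flt|/Fgt|/val_inj->] //; rewrite eqxx.
Qed.

Lemma memv_sum_img (K : fieldType) (V : vectType K) (I : finType)
    (f : I -> 'End(V)) (U : {vspace V}) x :
  x \in (\sum_i (f i @: U))%VS ->
  exists2 u : I -> V, (forall i, u i \in U) & x = \sum_i f i (u i).
Proof.
case/memv_sumP=> x_ x_img ->.
have /fin_all_exists[u fu] : forall i, exists u, u \in U /\ x_ i = f i u.
  by move=> i; have /memv_imgP[u uU ->] := x_img i isT; exists u.
by exists u => [i|]; [case: (fu i) | apply: eq_bigr => i _; case: (fu i)].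
Qed.

Section Powers.
Variables (K : fieldType) (V : vectType K) (N : 'End(V)).

Lemma lpow0 x : lpow N 0 x = x.
Proof. by rewrite /lpow /= id_lfunE. Qed.

Lemma lpowS n x : lpow N n.+1 x = N (lpow N n x).
Proof. by rewrite /lpow iterS comp_lfunE. Qed.

Lemma lpowD m n x : lpow N (m + n) x = lpow N m (lpow N n x).
Proof. by elim: m => [|m IHm]; rewrite ?lpow0 // addSn !lpowS IHm. Qed.

Lemma lpow_eq0_leq e n x : lpow N e = 0 -> (e <= n)%N -> lpow N n x = 0.
Proof. by move=> Ne0 le_en; rewrite -(subnK le_en) lpowD Ne0 lfunE linear0. Qed.

End Powers.

Section PolarForm.
Variables (K : fieldType) (V : vectType K) (Q : V -> K).

Lemma polarC x y : polar Q x y = polar Q y x.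
Proof. by rewrite /polar [y + x]addrC; ring. Qed.

Hypothesis qfQ : is_quadratic_form Q.

Lemma polarDl x y z : polar Q (x + y) z = polar Q x z + polar Q y z.
Proof. by case: qfQ. Qed.

Lemma polarDr x y z : polar Q x (y + z) = polar Q x y + polar Q x z.
Proof. by rewrite polarC polarDl !(polarC _ x). Qed.

Lemma polar0l y : polar Q 0 y = 0.
Proof. by case: qfQ => _ _ /(_ 0 0 y); rewrite scale0r mul0r. Qed.

Lemma polar0r y : polar Q y 0 = 0.
Proof. by rewrite polarC polar0l. Qed.

Lemma quadform0 : Q 0 = 0.
Proof. by case: qfQ => /(_ 0 0); rewrite scale0r expr0n mul0r. Qed.

Lemma polar_suml (I : finType) (f : I -> V) y :
  polar Q (\sum_i f i) y = \sum_i polar Q (f i) y.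
Proof. exact: (big_morph (polar Q ^~ y) (fun a b => polarDl a b y) (polar0l y)). Qed.

Lemma radical_isotropic_eq0 u :
  qf_nondegenerate Q -> in_radical Q u -> Q u = 0 -> u = 0.
Proof.
by move=> Qnd u_rad Qu0; apply: Qnd => //; [exact: polar0l | rewrite Qu0 quadform0].
Qed.

End PolarForm.

Section TildeM.
Variables (K : fieldType) (V : vectType K) (Q : V -> K) (N : 'End(V)).
Hypothesis qfQ : is_quadratic_form Q.
Hypothesis QN : forall x, Q (N x) = - polar Q x (N x).

Lemma polarN x y : polar Q (N x) (N y) + polar Q x (N y) + polar Q (N x) y = 0.
Proof.
have := QN (x + y); rewrite linearD /= => QNxy.
rewrite {1}/polar QNxy !QN !(polarDl qfQ) !(polarDr qfQ) (polarC Q y (N x)); ring.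
Qed.

Variable e : nat.
Hypothesis Ne0 : lpow N e = 0.

Lemma polar_lpow_eq0 i k a b :
  (e <= i + k)%N -> polar Q (lpow N i a) (lpow N k b) = 0.
Proof.
elim: i k => [|i IHi] k le_e_ik.
  by rewrite (lpow_eq0_leq b Ne0 le_e_ik) polar0r.
(* For fixed i.+1, descending induction on k: polarN trades (i.+1, k) for
   (i, k.+1) and (i.+1, k.+1). *)
have [m] := ubnP (e - k); elim: m k le_e_ik => // m IHm k le_e_ik lt_ek_m.
have [le_ek|lt_ke] := leqP e k; first by rewrite (lpow_eq0_leq b Ne0 le_ek) polar0r.
have := polarN (lpow N i a) (lpow N k b).
by rewrite -!lpowS IHi ?(IHm k.+1) ?add0r //; lia.
Qed.

Lemma polar_lpow_shift j k a b : (j + k).+1 = e ->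
  polar Q (lpow N j a) (lpow N k b) = (-1) ^+ j * polar Q a (lpow N (j + k) b).
Proof.
elim: j k => [|j IHj] k jk_e; first by rewrite lpow0 expr0 mul1r.
have := polarN (lpow N j a) (lpow N k b); rewrite -!lpowS polar_lpow_eq0; last lia.
rewrite IHj; last lia.
rewrite add0r addrC addnS -addSn => /eqP; rewrite addr_eq0 => /eqP ->.
by rewrite exprS mulN1r mulNr.
Qed.

Variable E : {vspace V}.
Hypothesis E_cap_ker : (E :&: lker (lpow N e.-1))%VS = 0%VS.

Lemma memE_lpow_pred_eq0 v : v \in E -> lpow N e.-1 v = 0 -> v = 0.
Proof.
move=> vE Nv0; have : v \in (E :&: lker (lpow N e.-1))%VS.
  by rewrite memv_cap vE memv_ker; apply/eqP.
by rewrite E_cap_ker memv0 => /eqP.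
Qed.

Lemma sum_lpow_eq0 (d : 'I_e -> V) : (forall i, d i \in E) ->
  \sum_(i < e) lpow N i (d i) = 0 -> forall i, d i = 0.
Proof.
move=> dE sum0; elim/ord_ltn_ind => i IHi; apply: memE_lpow_pred_eq0 => //.
have lt_ie := ltn_ord i.
have := congr1 (lpow N (e.-1 - i)) sum0.
rewrite linear0 linear_sum /= (@sumr_ord_pivot _ _ _ i) => [|j lt_ji|j lt_ij].
- by rewrite -lpowD subnK //; lia.
- by rewrite IHi ?linear0.
- by rewrite -lpowD (lpow_eq0_leq _ Ne0) //; lia.
Qed.

Hypothesis E_add_ker : (E + lker (lpow N e.-1))%VS = fullv.
Hypothesis e_ge2 : (2 <= e)%N.
Hypothesis Qnd : qf_nondegenerate Q.

Lemma polar_lpow_pred_nondeg v : v \in E ->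
  (forall z, z \in E -> polar Q v (lpow N e.-1 z) = 0) -> v = 0.
Proof.
move=> vE vNz; apply: memE_lpow_pred_eq0 => //.
have rad : in_radical Q (lpow N e.-1 v).
  move=> y; have := memvf y; rewrite -E_add_ker => /memv_addP[z zE [k kker ->]].
  have := @polar_lpow_shift e.-1 0 v (z + k); rewrite lpow0 addn0 => ->; last lia.
  move: kker; rewrite memv_ker linearD /= => /eqP->.
  by rewrite addr0 vNz ?mulr0.
apply: (radical_isotropic_eq0 qfQ Qnd rad).
have e1 : e.-1 = e.-2.+1 by lia.
by rewrite e1 lpowS QN -lpowS -e1 polarC rad oppr0.
Qed.

Lemma sum_lpow_orth_eq0 (w : 'I_e -> V) : (forall i, w i \in E) ->
  (forall (k : 'I_e) z, z \in E ->
     polar Q (\sum_(i < e) lpow N i (w i)) (lpow N k z) = 0) ->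
  forall i, w i = 0.
Proof.
move=> wE orth; elim/ord_ltn_ind => i IHi.
apply: polar_lpow_pred_nondeg (wE i) _ => z zE.
have lt_ie := ltn_ord i; have le_ie1 : (i <= e.-1)%N by lia.
have lt_ki : (e.-1 - i < e)%N by lia.
have := orth (Ordinal lt_ki) z zE.
rewrite (polar_suml qfQ) (@sumr_ord_pivot _ _ _ i) => [|j lt_ji|j lt_ij].
- rewrite polar_lpow_shift subnKC //; last lia.
  by move/eqP; rewrite mulf_eq0 signr_eq0 => /eqP.
- by rewrite IHi ?linear0 ?polar0l.
- by rewrite polar_lpow_eq0 //=; lia.
Qed.

End TildeM.

Theorem mainTheorem9 (K : fieldType) (V : vectType K) (Q : V -> K)
  (N : 'End(V)) (e : nat) (E : {vspace V}) :
  is_quadratic_form Q -> qf_nondegenerate Q ->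
  in_tildeM Q N -> N != 0 ->
  (2 <= e)%N -> lpow N e = 0 -> (forall m : nat, lpow N m = 0 -> (e <= m)%N) ->
  (E :&: lker (lpow N e.-1))%VS = 0%VS ->
  (E + lker (lpow N e.-1))%VS = fullv ->
  (forall v w : {ffun 'I_e -> V},
      (forall i, v i \in E) -> (forall i, w i \in E) ->
      \sum_(i < e) lpow N i (v i) = \sum_(i < e) lpow N i (w i) -> v = w)
  /\
  (forall x : V, x \in (\sum_(i < e) (lpow N i @: E))%VS ->
      (forall y : V, y \in (\sum_(i < e) (lpow N i @: E))%VS -> polar Q x y = 0) ->
      x = 0).
Proof.
move=> qfQ Qnd [_ QN] _ e_ge2 Ne0 _ E_cap_ker E_add_ker; split.
- move=> v w vE wE eq_sum; apply/ffunP => i; apply/subr0_eq.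
  apply: (sum_lpow_eq0 Ne0 E_cap_ker (d := fun i => v i - w i)) => [j|].
    exact: memvB.
  by under eq_bigr do rewrite linearB; rewrite sumrB eq_sum subrr.
- move=> x /memv_sum_img[u uE ->] orth.
  have u0 := sum_lpow_orth_eq0 qfQ QN Ne0 E_cap_ker E_add_ker e_ge2 Qnd uE.
  rewrite big1 // => i _; rewrite u0 ?linear0 // => k z zE.
  by apply/orth/(subvP (sumv_sup k isT (subvv _)))/memv_img.
Qed.
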